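(* Let $\phi:[t_0,\infty)\rightarrow\mathbb{R}^N$ and let $\Omega(t)\in\mathbb{R}^{N\times N}$ solve $$\dot{\Omega}(t)=-\lambda_{\Omega}\Omega(t)+\lambda_{\Omega}\frac{\phi(t)\phi^T(t)}{1+\phi^T(t)\phi(t)},\qquad \Omega(t_0)=\Omega_0,$$ where $\lambda_\Omega>0$ and $\Omega_0$ is symmetric with $0\leq\Omega_0\leq I$. Then for any $\phi$: (1) $\Omega(t)\geq0$ for all $t\geq t_0$; (2) $\Omega(t)\leq I$ for all $t\geq t_0$. Suppose in addition that $\phi$ is bounded and there exist $t_1\geq t_0$ and $t_2>t_1$ such that $\int_{t_1}^{t_2}\phi(\tau)\phi^T(\tau)d\tau\geq\alpha I$ with $\alpha\geq\alpha_0$, where $$\alpha_0=\frac{k_{\Omega}d}{\kappa\Gamma_{max}\rho_{\Omega}\lambda_{\Omega}\exp(-\lambda_{\Omega}(t_2-t_1))},\qquad d=\max_{\tau\in[t_1,t_2]}\{1+\lVert\phi(\tau)\rVert^2\}.$$ Then (3) $\Omega(t)\geq\Omega_{FE}I>(1/(\kappa\Gamma_{max}))I$ for all $t\in[t_2,t_3]$, where $\Omega_{FE}=k_{\Omega}/(\kappa\Gamma_{max})$ and $t_3=t_2-(\ln\rho_{\Omega})/\lambda_{\Omega}$. If in addition $\phi$ is persistently exciting for all $t\geq t_1$, i.e. there are $T>0$ and $\alpha\geq\alpha_0'$ with $\int_t^{t+T}\phi(\tau)\phi^T(\tau)d\tau\geq\alpha I$ for all $t\geq t_1$, where $t_2'=t_1+T$,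 $d'=\max_{\tau\geq t_1}\{1+\lVert\phi(\tau)\rVert^2\}$ and $\alpha_0'=\alpha_0\exp(-\lambda_{\Omega}(t_2-t_2'))d'/d$, then (4) $\Omega(t)\geq\Omega_{FE}I>(1/(\kappa\Gamma_{max}))I$ for all $t\geq t_2'$.
   Context: $\lVert\cdot\rVert$ is the Euclidean 2-norm. For symmetric matrices, $A\leq B$ means $B-A$ is positive semidefinite. The constants are: $\kappa>0$ and $\Gamma_{max}>0$ with $\kappa>\Gamma_{max}^{-1}$, $\rho_{\Omega}\in(0,1)$, and $k_{\Omega}>1$. *)

From Stdlib Require Import Reals.
From Coquelicot Require Import Coquelicot.
From mathcomp Require Import all_boot all_algebra.
From mathcomp Require Import Rstruct.

Set Implicit Arguments.
Unset Strict Implicit.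
Unset Printing Implicit Defensive.

Local Open Scope ring_scope.

Definition mx_le (N : nat) (A B : 'M[R]_N) : Prop :=
  forall x : 'cV[R]_N, 0 <= (x^T *m (B - A) *m x) 0 0.

Definition mx_lt (N : nat) (A B : 'M[R]_N) : Prop :=
  forall x : 'cV[R]_N, x != 0 -> 0 < (x^T *m (B - A) *m x) 0 0.

Definition sqnorm (N : nat) (v : 'cV[R]_N) : R := (v^T *m v) 0 0.

Definition outer (N : nat) (v : 'cV[R]_N) : 'M[R]_N := v *m v^T.

Definition int_outer (N : nat) (phi : R -> 'cV[R]_N) (a b : R) : 'M[R]_N :=
  \matrix_(i, j) RInt (fun s => outer (phi s) i j) a b.

Definition ex_int_outer (N : nat) (phi : R -> 'cV[R]_N) (a b : R) : Prop :=
  forall i j : 'I_N, ex_RInt (fun s => outer (phi s) i j) a b.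

Definition solves_ode (N : nat) (lam t0 : R) (phi : R -> 'cV[R]_N)
    (Omega : R -> 'M[R]_N) (Omega0 : 'M[R]_N) : Prop :=
  Omega t0 = Omega0 /\
  (forall i j : 'I_N,
     filterlim (fun s => Omega s i j) (at_right t0) (locally (Omega0 i j))) /\
  (forall t : R, (t0 < t)%R -> forall i j : 'I_N,
     is_derive (fun s => Omega s i j) t
       (- lam * Omega t i j
        + lam * (outer (phi t) i j / (1 + sqnorm (phi t))))).

Definition bounded_on_from (N : nat) (t0 : R) (phi : R -> 'cV[R]_N) : Prop :=
  exists B : R, forall t : R, (t0 <= t)%R -> sqnorm (phi t) <= B.

From Stdlib Require Import Reals Lra IndefiniteDescription.
From Coquelicot Require Import Coquelicot.
From mathcomp Require Import all_boot all_order all_algebra Rstruct.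

Set Implicit Arguments.
Unset Strict Implicit.
Unset Printing Implicit Defensive.

(* For a fixed vector x, w(t) = x^T Omega(t) x solves the scalar equation
   w' = -lam w + lam q with q = (x^T phi)^2 / (1 + |phi|^2), and 0 <= q <= |x|^2
   by Cauchy-Schwarz.  Through the integrating factor exp (lam t), the increment
   of exp (lam t) w(t) over [a, b] dominates the integral of any minorant of
   lam exp (lam s) q(s).  The minorant 0 gives monotonicity, hence (1) and,
   applied to |x|^2 - w, (2).  The minorant lam exp (lam a) (x^T phi)^2 / d gives
   w(t) >= lam alpha |x|^2 exp (- lam (t - a)) / d after an exciting window
   [a, b] with b <= t, and (3) and (4) are exponential bookkeeping on this bound.
   Since phi is merely integrable, the integral comparison is proved on Riemann
   sums tagged by mean-value points rather than by the fundamental theorem of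
   calculus. *)

Local Open Scope R_scope.

Section IntegralOfMinorantOfDerivative.

Variables (G dG p : R -> R) (a b : R).
Hypotheses (lt_ab : a < b)
  (G_derive : forall s, a < s <= b -> is_derive G s (dG s))
  (G_right_cont : filterlim G (at_right a) (locally (G a)))
  (p_le_dG : forall s, a <= s <= b -> p s <= dG s).

(* Freezing G to the left of a turns right-continuity at a into the two-sided
   continuity required by the mean value theorem. *)
Let Ga s := if Rle_dec s a then G a else G s.

Let Ga_eq s : a <= s -> Ga s = G s.
Proof. by rewrite /Ga => Has; case: Rle_dec => //= Hsa; f_equal; lra. Qed.

Let Ga_derive s : a < s <= b -> is_derive Ga s (dG s).
Proof.
move=> Hs; apply: (is_derive_ext_loc G); last exact: G_derive.
have Hd : 0 < s - a by lra.
exists (mkposreal _ Hd) => u /= /Rabs_lt_between Hu.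
by rewrite Ga_eq //; rewrite /minus /plus /Hierarchy.opp /= in Hu; lra.
Qed.

Let Ga_continuity s : a <= s <= b -> continuity_pt Ga s.
Proof.
move=> Hs; apply/continuity_pt_filterlim.
case: (Req_dec s a) => [->|Hsa].
- rewrite Ga_eq; last exact: Rle_refl.
  move=> P HP; have [d Hd] := G_right_cont HP; exists d => u Hu.
  rewrite /Ga; case: Rle_dec => /= Hua; first exact: locally_singleton.
  by apply: Hd; [|lra].
- apply: (@ex_derive_continuous R_AbsRing R_NormedModule).
  by exists (dG s); apply: Ga_derive; lra.
Qed.

Let exists_mvt_tag x y : exists c, x <= y ->
  x <= c <= y /\ (a <= x -> y <= b -> (y - x) * p c <= G y - G x).
Proof.
case: (Rle_dec x y) => Hxy; last by exists x.
case: (Rle_dec a x) => Hax; last by exists x; split; [lra|].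
case: (Rle_dec y b) => Hyb; last by exists x; split; [lra|].
case: (Req_dec x y) => [<-|Hne].
  by exists x => _; split; [lra|]; rewrite !Rminus_diag Rmult_0_l; lra.
have [||c [Hc HGc]] := MVT_gen Ga x y dG.
- by move=> u; rewrite Rmin_left ?Rmax_right // => Hu; apply: Ga_derive; lra.
- by move=> u; rewrite Rmin_left ?Rmax_right // => Hu; apply: Ga_continuity; lra.
rewrite Rmin_left ?Rmax_right // in Hc.
exists c => _; split=> // _ _.
rewrite -(@Ga_eq y) -?(@Ga_eq x) ?HGc; try lra.
have := @p_le_dG c; nra.
Qed.

Let mvt_tag x y := proj1_sig (constructive_indefinite_description _ (exists_mvt_tag x y)).

Let mvt_tagP x y : x <= y -> x <= mvt_tag x y <= y /\
  (a <= x -> y <= b -> (y - x) * p (mvt_tag x y) <= G y - G x).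
Proof. exact: (proj2_sig (constructive_indefinite_description _ (exists_mvt_tag x y))). Qed.

Let Riemann_sum_mvt_tag_le (l : list R) h : SF_seq.sorted Rle (h :: l) -> a <= h ->
  seq.last h l <= b -> Riemann_sum p (SF_seq_f2 mvt_tag (h :: l)) <= G (seq.last h l) - G h.
Proof.
elim: l h => [|h2 l IH] h Hs Hah Hlb.
  by rewrite /Riemann_sum /= /zero /=; lra.
move: Hs Hlb => /= [Hh Hs] Hlb.
have Hh2 : h2 <= b by have /= := sorted_last (h2 :: l) 0 Hs (Nat.lt_0_succ _) h2; lra.
rewrite SF_cons_f2 ?Riemann_sum_cons /=; last exact: Nat.lt_0_succ.
have := IH h2 Hs (Rle_trans _ _ _ Hah Hh) Hlb.
have [_ /(_ Hah Hh2)] := mvt_tagP Hh.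
rewrite /plus /scal /= /mult /=; lra.
Qed.

Let Riemann_sum_unif_part_le n :
  Riemann_sum p (SF_seq_f2 mvt_tag (unif_part a b n)) <= G b - G a.
Proof.
have := unif_part_sort a b n (Rlt_le _ _ lt_ab).
have := head_unif_part 0 a b n; have := last_unif_part 0 a b n.
case: (unif_part a b n) => [|h l] /= Hlast Hhead Hs; first lra.
by rewrite -Hlast -Hhead; apply: Riemann_sum_mvt_tag_le => //; lra.
Qed.

Lemma is_RInt_le_increment I : is_RInt p a b I -> I <= G b - G a.
Proof.
move=> HI; apply: Rnot_lt_le => HbI.
have He : 0 < I - (G b - G a) by lra.
have [d Hd] := HI _ (locally_ball I (mkposreal _ He)).
have [n Hn] := seq_step_unif_part_ex a b d.
set ptd := SF_seq_f2 mvt_tag (unif_part a b n).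
have Hlx : SF_lx ptd = unif_part a b n by apply: SF_lx_f2; exact: Nat.lt_0_succ.
have mvt_tag_in x y : x <= y -> x <= mvt_tag x y <= y by case/mvt_tagP.
have [_ [Hpt [Hh Hl]]] := Riemann_fine_unif_part mvt_tag a b n mvt_tag_in (Rlt_le _ _ lt_ab).
rewrite -/ptd Hlx in Hpt Hh Hl.
have := Hd ptd; rewrite Hlx Rmin_left ?Rmax_right ?sign_eq_1; try lra.
move=> /(_ Hn (conj Hpt (conj Hh Hl))).
rewrite /ball /= /AbsRing_ball /abs /minus /plus /Hierarchy.opp /scal /= /mult /= Rmult_1_l.
move=> /Rabs_lt_between [Hlow _].
(* [Hlow] sees the Riemann sum through another module structure on [R]. *)
set RS := Riemann_sum _ _ in Hlow.
have : RS <= G b - G a := Riemann_sum_unif_part_le n.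
lra.
Qed.

End IntegralOfMinorantOfDerivative.

Lemma exp_le_compat x y : x <= y -> exp x <= exp y.
Proof. by case/Rle_lt_or_eq_dec => [/exp_increasing|->]; lra. Qed.

Lemma is_derive_exp_scale lam s : is_derive (fun s => exp (lam * s)) s (lam * exp (lam * s)).
Proof. by auto_derive => //; ring. Qed.

Lemma filterlim_at_right_continuous (g : R -> R) a :
  continuous g a -> filterlim g (at_right a) (locally (g a)).
Proof. by apply: filterlim_filter_le_1; apply: filter_le_within. Qed.

Section LinearODE.

Variables (f Q : R -> R) (lam t0 : R).
Hypotheses (lam_gt0 : 0 < lam)
  (f_derive : forall t, t0 < t -> is_derive f t (- lam * f t + lam * Q t))
  (f_right_cont : filterlim f (at_right t0) (locally (f t0))).

Let weighted s := exp (lam * s) * f s.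

Let weighted_derive s : t0 < s -> is_derive weighted s (lam * exp (lam * s) * Q s).
Proof.
move=> Hs.
have -> : lam * exp (lam * s) * Q s =
  lam * exp (lam * s) * f s + exp (lam * s) * (- lam * f s + lam * Q s) by ring.
exact: (is_derive_mult _ _ s _ _ (is_derive_exp_scale lam s) (f_derive Hs) Rmult_comm).
Qed.

Let f_right_cont_at a : t0 <= a -> filterlim f (at_right a) (locally (f a)).
Proof.
case: (Req_dec a t0) => [-> //|Hne Ha].
by apply: filterlim_at_right_continuous; apply: ex_derive_continuous;
  eexists; apply: f_derive; lra.
Qed.

Let weighted_right_cont a : t0 <= a -> filterlim weighted (at_right a) (locally (weighted a)).
Proof.
move=> Ha; have exp_right_cont :
    filterlim (fun s => exp (lam * s)) (at_right a) (locally (exp (lam * a))).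
  by apply: filterlim_at_right_continuous; apply: ex_derive_continuous;
    eexists; apply: is_derive_exp_scale.
exact: (filterlim_comp_2 _ _ mult exp_right_cont (f_right_cont_at Ha) (filterlim_mult _ _)).
Qed.

Lemma is_RInt_le_weighted_increment (p : R -> R) a b I : t0 <= a -> a < b ->
  (forall s, a <= s <= b -> p s <= lam * exp (lam * s) * Q s) -> is_RInt p a b I ->
  I <= exp (lam * b) * f b - exp (lam * a) * f a.
Proof.
move=> Ha Hab Hp; apply: (is_RInt_le_increment (G := weighted) Hab _ _ Hp).
- by move=> s Hs; apply: weighted_derive; lra.
- exact: weighted_right_cont.
Qed.

Hypothesis Q_ge0 : forall s, t0 <= s -> 0 <= Q s.

Lemma weighted_nondecreasing a b : t0 <= a -> a <= b ->
  exp (lam * a) * f a <= exp (lam * b) * f b.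
Proof.
move=> Ha /Rle_lt_or_eq_dec [Hab|<-]; last exact: Rle_refl.
have HI : is_RInt (fun=> 0) a b 0.
  by have := is_RInt_const a b 0; rewrite /scal /= /mult /= Rmult_0_r.
have Hp s : a <= s <= b -> 0 <= lam * exp (lam * s) * Q s.
  move=> Hs; apply: Rmult_le_pos; last by apply: Q_ge0; lra.
  by apply: Rmult_le_pos; [lra | apply: Rlt_le; apply: exp_pos].
have := is_RInt_le_weighted_increment Ha Hab Hp HI; lra.
Qed.

Lemma ode_ge0 t : 0 <= f t0 -> t0 <= t -> 0 <= f t.
Proof.
move=> Hf0 Ht; have := weighted_nondecreasing (Rle_refl t0) Ht.
have := exp_pos (lam * t0); have := exp_pos (lam * t); nra.
Qed.

Lemma ode_ge_window (q : R -> R) a b t d V A : t0 <= a -> a < b -> b <= t -> 0 < d ->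
  (forall s, a <= s <= b -> 0 <= q s /\ q s / d <= Q s) ->
  is_RInt q a b V -> A <= V -> 0 <= f a ->
  lam * A / d * exp (- lam * (t - a)) <= f t.
Proof.
move=> Ha Hab Hbt Hd Hq HV HAV Hfa.
set c := lam * exp (lam * a) / d.
have Hc : 0 < c by apply: Rdiv_lt_0_compat => //; apply: Rmult_lt_0_compat => //; apply: exp_pos.
have Hinc : c * V <= exp (lam * b) * f b - exp (lam * a) * f a.
  apply: (@is_RInt_le_weighted_increment (fun s => c * q s)) => //; last exact: is_RInt_scal.
  move=> s Hs; have [Hq0 HqQ] := Hq s Hs.
  have -> : c * q s = lam * (exp (lam * a) * (q s / d)) by rewrite /c; field; lra.
  rewrite Rmult_assoc; apply: Rmult_le_compat_l; first lra.
  apply: Rmult_le_compat => //; first exact: Rlt_le (exp_pos _).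
  - exact: Rdiv_le_0_compat.
  - by apply: exp_le_compat; apply: Rmult_le_compat_l; lra.
have Hmono := weighted_nondecreasing (Rlt_le _ _ (Rle_lt_trans _ _ _ Ha Hab)) Hbt.
have -> : lam * A / d * exp (- lam * (t - a)) = c * A / exp (lam * t).
  have Hexp : exp (- lam * (t - a)) = exp (lam * a) / exp (lam * t).
    by rewrite /Rdiv -exp_Ropp -exp_plus; f_equal; ring.
  by rewrite Hexp /c; field; split; apply: Rgt_not_eq => //; apply: exp_pos.
rewrite Rle_div_l; last exact: exp_pos.
have := exp_pos (lam * a); have : c * A <= c * V by apply: Rmult_le_compat_l; lra.
nra.
Qed.

End LinearODE.

Lemma ode_le (f Q : R -> R) lam t0 c t : 0 < lam ->
  (forall t, t0 < t -> is_derive f t (- lam * f t + lam * Q t)) ->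
  filterlim f (at_right t0) (locally (f t0)) ->
  (forall s, t0 <= s -> Q s <= c) -> f t0 <= c -> t0 <= t -> f t <= c.
Proof.
move=> Hlam Hf Hf0 HQ Hc Ht.
suff : 0 <= c - f t by lra.
apply: (@ode_ge0 (fun s => c - f s) (fun s => c - Q s) lam t0) => //; last lra.
- move=> s Hs.
  have -> : - lam * (c - f s) + lam * (c - Q s) = minus zero (- lam * f s + lam * Q s).
    by rewrite /minus /plus /Hierarchy.opp /zero /=; ring.
  exact: is_derive_minus (is_derive_const _ _) (Hf s Hs).
- apply: (filterlim_comp_2 _ _ plus (filterlim_const c) _ (filterlim_plus _ _)).
  exact: (filterlim_comp _ _ _ _ _ _ _ _ Hf0 (filterlim_opp _)).
- by move=> s /HQ; lra.
Qed.

Lemma OmegaFE_le_excitation_bound K rho lam kO d alpha t1 t2 t :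
  0 < K -> 0 < rho -> 0 < lam -> 0 < d -> 0 <= kO ->
  kO * d / (K * rho * lam * exp (- lam * (t2 - t1))) <= alpha ->
  t2 <= t <= t2 - ln rho / lam ->
  kO / K <= lam * alpha / d * exp (- lam * (t - t1)).
Proof.
move=> HK Hrho Hlam Hd HkO Halpha Ht.
set E := exp (- lam * (t2 - t1)) in Halpha *.
have HE : 0 < E by apply: exp_pos.
have HP : 0 < K * rho * lam * E by do 3 (apply: Rmult_lt_0_compat => //).
have Hrate : kO * d <= alpha * (K * rho * lam * E) by move: Halpha; rewrite Rle_div_l.
have Hdecay : rho * E <= exp (- lam * (t - t1)).
  have -> : exp (- lam * (t - t1)) = exp (- lam * (t - t2)) * E by rewrite -exp_plus; f_equal; ring.
  apply: Rmult_le_compat_r; first lra.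
  rewrite -[X in X <= _](exp_ln rho Hrho); apply: exp_le_compat.
  have : lam * (t - t2) <= lam * (- ln rho / lam) by apply: Rmult_le_compat_l; lra.
  have -> : lam * (- ln rho / lam) = - ln rho by field; lra.
  lra.
have Halpha0 : 0 <= alpha by have := Rmult_le_pos _ _ HkO (Rlt_le _ _ Hd); nra.
apply: (Rle_trans _ (lam * alpha / d * (rho * E))).
  apply: (Rmult_le_reg_r (K * d)); first nra.
  have -> : kO / K * (K * d) = kO * d by field; lra.
  have -> : lam * alpha / d * (rho * E) * (K * d) = alpha * (K * rho * lam * E) by field; lra.
  exact: Hrate.
apply: Rmult_le_compat_l => //.
apply: Rmult_le_pos; [nra | exact: Rlt_le (Rinv_0_lt_compat _ Hd)].
Qed.

Lemma OmegaFE_le_PE_excitation_bound K rho lam kO d d' alpha' t1 t2 T :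
  0 < K -> 0 < rho < 1 -> 0 < lam -> 0 < d -> 0 < d' -> 0 <= kO ->
  kO * d / (K * rho * lam * exp (- lam * (t2 - t1))) * exp (- lam * (t2 - (t1 + T))) * d' / d
    <= alpha' ->
  kO / K <= lam * alpha' / d' * exp (- lam * T).
Proof.
move=> HK Hrho Hlam Hd Hd' HkO.
have HE := exp_pos (- lam * (t2 - t1)); have HT := exp_pos (lam * T).
have -> : exp (- lam * (t2 - (t1 + T))) = exp (- lam * (t2 - t1)) * exp (lam * T).
  by rewrite -exp_plus; f_equal; ring.
have -> : exp (- lam * T) = / exp (lam * T) by rewrite -exp_Ropp; f_equal; ring.
have -> : kO * d / (K * rho * lam * exp (- lam * (t2 - t1)))
    * (exp (- lam * (t2 - t1)) * exp (lam * T)) * d' / d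
  = kO * d' * exp (lam * T) / (K * rho * lam) by field; lra.
move=> Halpha.
apply: (Rle_trans _ (kO / (K * rho))).
  apply: (Rmult_le_reg_r (K * rho)); first nra.
  have -> : kO / K * (K * rho) = kO * rho by field; lra.
  have -> : kO / (K * rho) * (K * rho) = kO by field; lra.
  nra.
apply: (Rmult_le_reg_r (d' * exp (lam * T) / lam)).
  by apply: Rdiv_lt_0_compat => //; apply: Rmult_lt_0_compat.
have -> : kO / (K * rho) * (d' * exp (lam * T) / lam) = kO * d' * exp (lam * T) / (K * rho * lam).
  by field; lra.
have -> : lam * alpha' / d' * / exp (lam * T) * (d' * exp (lam * T) / lam) = alpha'.
  by field; lra.
exact: Halpha.
Qed.

From mathcomp Require Import ring lra.
Import Order.TTheory GRing.Theory Num.Theory.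
Local Open Scope ring_scope.

Definition quad (N : nat) (x : 'cV[R]_N) (M : 'M[R]_N) : R := (x^T *m M *m x) 0 0.

Definition dotv (N : nat) (x v : 'cV[R]_N) : R := (x^T *m v) 0 0.

Section QuadraticForms.

Variables (N : nat) (x : 'cV[R]_N).

Lemma quadE (M : 'M[R]_N) : quad x M = \sum_j \sum_i x i 0 * x j 0 * M i j.
Proof.
rewrite /quad !mxE; apply: eq_bigr => j _; rewrite !mxE mulr_suml.
by apply: eq_bigr => i _; rewrite !mxE; ring.
Qed.

Lemma quadD (A B : 'M[R]_N) : quad x (A + B) = quad x A + quad x B.
Proof. by rewrite /quad mulmxDr mulmxDl !mxE. Qed.

Lemma quadZ c (A : 'M[R]_N) : quad x (c *: A) = c * quad x A.
Proof. by rewrite /quad -scalemxAr -scalemxAl mxE. Qed.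

Lemma quadB (A B : 'M[R]_N) : quad x (A - B) = quad x A - quad x B.
Proof. by rewrite /quad mulmxBr mulmxBl !mxE. Qed.

Lemma quad0 : quad x 0 = 0.
Proof. by rewrite /quad mulmx0 mul0mx mxE. Qed.

Lemma quad_scalar c : quad x c%:M = c * sqnorm x.
Proof. by rewrite /quad /sqnorm mul_mx_scalar -scalemxAl mxE. Qed.

Lemma quad_outer v : quad x (outer v) = dotv x v ^+ 2.
Proof.
rewrite /quad /outer /dotv !mulmxA -(mulmxA (x^T *m v)).
have -> : v^T *m x = (x^T *m v)^T by rewrite trmx_mul trmxK.
by rewrite mxE big_ord1 [X in _ * X]mxE expr2.
Qed.

End QuadraticForms.

Lemma sqnormE N (v : 'cV[R]_N) : sqnorm v = \sum_i v i 0 ^+ 2.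
Proof. by rewrite /sqnorm mxE; apply: eq_bigr => i _; rewrite mxE expr2. Qed.

Lemma dotvE N (x v : 'cV[R]_N) : dotv x v = \sum_i x i 0 * v i 0.
Proof. by rewrite /dotv mxE; apply: eq_bigr => i _; rewrite mxE. Qed.

Lemma sqnorm_ge0 N (v : 'cV[R]_N) : 0 <= sqnorm v.
Proof. by rewrite sqnormE; apply: sumr_ge0 => i _; apply: sqr_ge0. Qed.

Lemma sqnorm1_gt0 N (v : 'cV[R]_N) : 0 < 1 + sqnorm v.
Proof. by rewrite ltr_wpDr ?sqnorm_ge0. Qed.

Lemma sqnorm_gt0 N (v : 'cV[R]_N) : v != 0 -> 0 < sqnorm v.
Proof.
move=> v_neq0; rewrite lt_neqAle sqnorm_ge0 andbT eq_sym; apply: contra v_neq0.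
rewrite sqnormE psumr_eq0 => [/allP v0|i _]; last exact: sqr_ge0.
apply/eqP/matrixP => i j; rewrite (ord1 j) !mxE.
by apply/eqP; rewrite -sqrf_eq0; apply: v0; rewrite mem_index_enum.
Qed.

Lemma sum_mul_sum N (a b : 'I_N -> R) :
  \sum_i \sum_j a i * b j = (\sum_i a i) * (\sum_j b j).
Proof. by rewrite mulr_suml; apply: eq_bigr => i _; rewrite mulr_sumr. Qed.

Lemma dotv_sqr_le N (x v : 'cV[R]_N) : dotv x v ^+ 2 <= sqnorm x * sqnorm v.
Proof.
have : 0 <= \sum_i \sum_j (x i 0 * v j 0 - x j 0 * v i 0) ^+ 2.
  by apply: sumr_ge0 => i _; apply: sumr_ge0 => j _; apply: sqr_ge0.
(* Lagrange's identity *)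
have -> : \sum_i \sum_j (x i 0 * v j 0 - x j 0 * v i 0) ^+ 2 =
    \sum_i \sum_j x i 0 ^+ 2 * v j 0 ^+ 2 + \sum_i \sum_j x j 0 ^+ 2 * v i 0 ^+ 2
    - 2 * \sum_i \sum_j (x i 0 * v i 0) * (x j 0 * v j 0).
  rewrite mulr_sumr -big_split -sumrB; apply: eq_bigr => i _.
  by rewrite mulr_sumr -big_split -sumrB; apply: eq_bigr => j _ /=; ring.
rewrite [X in _ + X - _]exchange_big /= !sum_mul_sum -(sqnormE x) -(sqnormE v) -(dotvE x v) expr2.
lra.
Qed.

Lemma mx_leP N (A B : 'M[R]_N) : mx_le A B <-> forall x, quad x A <= quad x B.
Proof. by split=> H x; have := H x; rewrite -/(quad x (B - A)) quadB subr_ge0. Qed.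

Lemma mx_le_scalar N c c' (A : 'M[R]_N) : c <= c' -> mx_le c'%:M A -> mx_le c%:M A.
Proof.
move=> le_cc' /mx_leP HA; apply/mx_leP => x; apply: le_trans (HA x).
by rewrite !quad_scalar ler_wpM2r // sqnorm_ge0.
Qed.

Lemma mx_lt_scalar N c c' : c < c' -> @mx_lt N c%:M c'%:M.
Proof.
move=> lt_cc' x x_neq0; rewrite -/(quad x _) quadB !quad_scalar -mulrBl.
by rewrite mulr_gt0 ?subr_gt0 ?sqnorm_gt0.
Qed.

Section CalculusOfFiniteSums.

Variables (I : Type) (r : seq I) (F : I -> R -> R).

Lemma is_derive_sum (dF : I -> R) t : (forall i, is_derive (F i) t (dF i)) ->
  is_derive (fun s => \sum_(i <- r) F i s) t (\sum_(i <- r) dF i).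
Proof.
move=> HF; elim: r => [|i r' IH].
  apply: (@is_derive_ext R_AbsRing R_NormedModule (fun=> 0)) => [s|]; first by rewrite big_nil.
  by rewrite big_nil; apply: (@is_derive_const R_AbsRing R_NormedModule).
apply: (@is_derive_ext R_AbsRing R_NormedModule (fun s => F i s + \sum_(j <- r') F j s)).
  by move=> s; rewrite big_cons.
by rewrite big_cons; apply: (@is_derive_plus R_AbsRing R_NormedModule).
Qed.

Lemma filterlim_sum (l : I -> R) a : (forall i, filterlim (F i) (at_right a) (locally (l i))) ->
  filterlim (fun s => \sum_(i <- r) F i s) (at_right a) (locally (\sum_(i <- r) l i)).
Proof.
move=> HF; elim: r => [|i r' IH].
  apply: (filterlim_ext (fun=> 0)) => [s|]; first by rewrite big_nil.
  by rewrite big_nil; apply: filterlim_const.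
apply: (filterlim_ext (fun s => F i s + \sum_(j <- r') F j s)).
  by move=> s; rewrite big_cons.
rewrite big_cons.
exact: (filterlim_comp_2 _ _ plus (HF i) IH (@filterlim_plus R_AbsRing R_NormedModule _ _)).
Qed.

Lemma is_RInt_sum (l : I -> R) a b : (forall i, is_RInt (F i) a b (l i)) ->
  is_RInt (fun s => \sum_(i <- r) F i s) a b (\sum_(i <- r) l i).
Proof.
move=> HF; elim: r => [|i r' IH].
  apply: (@is_RInt_ext R_NormedModule (fun=> 0)) => [s _|]; first by rewrite big_nil.
  by rewrite big_nil; have := @is_RInt_const R_NormedModule a b 0; rewrite scal_zero_r.
apply: (@is_RInt_ext R_NormedModule (fun s => F i s + \sum_(j <- r') F j s)).
  by move=> s _; rewrite big_cons.
by rewrite big_cons; apply: (@is_RInt_plus R_NormedModule).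
Qed.

End CalculusOfFiniteSums.

Section EntrywiseCalculus.

Variables (N : nat) (x : 'cV[R]_N) (M : R -> 'M[R]_N).

Lemma is_derive_quad (D : 'M[R]_N) t : (forall i j, is_derive (fun s => M s i j) t (D i j)) ->
  is_derive (fun s => quad x (M s)) t (quad x D).
Proof.
move=> HM; apply: (@is_derive_ext R_AbsRing R_NormedModule
  (fun s => \sum_j \sum_i x i 0 * x j 0 * M s i j)) => [s|]; first by rewrite quadE.
rewrite quadE; apply: is_derive_sum => j; apply: is_derive_sum => i.
exact: is_derive_scal.
Qed.

Lemma filterlim_quad (L : 'M[R]_N) a :
  (forall i j, filterlim (fun s => M s i j) (at_right a) (locally (L i j))) ->
  filterlim (fun s => quad x (M s)) (at_right a) (locally (quad x L)).
Proof.
move=> HM; apply: (filterlim_ext (fun s => \sum_j \sum_i x i 0 * x j 0 * M s i j)) => [s|];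
  first by rewrite quadE.
rewrite quadE; apply: filterlim_sum => j; apply: filterlim_sum => i.
exact: (filterlim_comp_2 (fun=> x i 0 * x j 0) _ mult (filterlim_const _) (HM i j)
  (@filterlim_mult R_AbsRing _ _)).
Qed.

Lemma is_RInt_quad (L : 'M[R]_N) a b : (forall i j, is_RInt (fun s => M s i j) a b (L i j)) ->
  is_RInt (fun s => quad x (M s)) a b (quad x L).
Proof.
move=> HM; apply: (@is_RInt_ext R_NormedModule
  (fun s => \sum_j \sum_i x i 0 * x j 0 * M s i j)) => [s _|]; first by rewrite quadE.
rewrite quadE; apply: is_RInt_sum => j; apply: is_RInt_sum => i.
exact: (@is_RInt_scal R_NormedModule).
Qed.

End EntrywiseCalculus.

Section FilteredRegressor.

Variables (N : nat) (lam t0 : R) (phi : R -> 'cV[R]_N) (Omega : R -> 'M[R]_N) (Omega0 : 'M[R]_N).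
Hypotheses (lam_gt0 : 0 < lam) (sol : solves_ode lam t0 phi Omega Omega0).

Let lam_pos : Rlt 0 lam. Proof. exact/RltP. Qed.

Section Direction.

Variable x : 'cV[R]_N.

Let forcing s := dotv x (phi s) ^+ 2 / (1 + sqnorm (phi s)).

Let forcing_ge0 s : 0 <= forcing s.
Proof. by rewrite divr_ge0 ?sqr_ge0 ?ltW ?sqnorm1_gt0. Qed.

Let forcing_le s : forcing s <= sqnorm x.
Proof.
rewrite ler_pdivrMr ?sqnorm1_gt0 // mulrDr mulr1; apply: le_trans (dotv_sqr_le x (phi s)) _.
by rewrite lerDr sqnorm_ge0.
Qed.

Let quad_Omega_derive t : Rlt t0 t ->
  is_derive (fun s => quad x (Omega s)) t (- lam * quad x (Omega t) + lam * forcing t).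
Proof.
case: sol => _ [_ Hder] /RltP Ht.
set D := - lam *: Omega t + (lam / (1 + sqnorm (phi t))) *: outer (phi t).
have -> : - lam * quad x (Omega t) + lam * forcing t = quad x D.
  by rewrite quadD !quadZ quad_outer /forcing; ring.
apply: is_derive_quad => i j.
have -> : D i j = - lam * Omega t i j + lam * (outer (phi t) i j / (1 + sqnorm (phi t))).
  by rewrite !mxE; ring.
exact: Hder.
Qed.

Let quad_Omega_right_cont :
  filterlim (fun s => quad x (Omega s)) (at_right t0) (locally (quad x (Omega t0))).
Proof. by case: sol => -> [Hlim _]; apply: filterlim_quad. Qed.

Lemma quad_Omega_ge0 t : 0 <= quad x Omega0 -> t0 <= t -> 0 <= quad x (Omega t).
Proof.
move=> /RleP H0 /RleP Ht; apply/RleP.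
apply: (ode_ge0 lam_pos quad_Omega_derive quad_Omega_right_cont) => // [s _|].
- exact/RleP.
- by case: sol => ->.
Qed.

Lemma quad_Omega_le t : quad x Omega0 <= sqnorm x -> t0 <= t -> quad x (Omega t) <= sqnorm x.
Proof.
move=> /RleP H0 /RleP Ht; apply/RleP.
apply: (ode_le lam_pos quad_Omega_derive quad_Omega_right_cont) => // [s _|].
- exact/RleP.
- by case: sol => ->.
Qed.

Lemma quad_Omega_ge_window a b t d alpha : 0 <= quad x Omega0 ->
  t0 <= a -> a < b -> b <= t -> (forall s, a <= s <= b -> 1 + sqnorm (phi s) <= d) ->
  ex_int_outer phi a b -> mx_le alpha%:M (int_outer phi a b) ->
  lam * alpha / d * exp (- lam * (t - a)) * sqnorm x <= quad x (Omega t).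
Proof.
move=> H0 Ha Hab Hbt Hd Hint Halpha.
have -> : lam * alpha / d * exp (- lam * (t - a)) * sqnorm x =
  lam * (alpha * sqnorm x) / d * exp (- lam * (t - a)) by ring.
have Hd_gt0 : 0 < d by apply: lt_le_trans (sqnorm1_gt0 (phi a)) (Hd a _); rewrite lexx ltW.
apply/RleP; apply: (ode_ge_window (q := fun s => dotv x (phi s) ^+ 2) (b := b)
  (V := quad x (int_outer phi a b)) lam_pos quad_Omega_derive quad_Omega_right_cont _).
- by move=> s _; apply/RleP.
- exact/RleP.
- exact/RltP.
- exact/RleP.
- exact/RltP.
- move=> s [/RleP Has /RleP Hsb]; split; apply/RleP; first exact: sqr_ge0.
  rewrite ler_wpM2l ?sqr_ge0 // lef_pV2 ?posrE ?sqnorm1_gt0 //; apply: Hd; exact/andP.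
- apply: (@is_RInt_ext R_NormedModule (fun s => quad x (outer (phi s)))) => [s _|].
    by rewrite quad_outer.
  by apply: is_RInt_quad => i j; rewrite mxE; apply: RInt_correct.
- by apply/RleP; move/mx_leP: Halpha => /(_ x); rewrite quad_scalar.
- exact/RleP/quad_Omega_ge0.
Qed.

End Direction.

Lemma Omega_le1 t : mx_le Omega0 1%:M -> t0 <= t -> mx_le (Omega t) 1%:M.
Proof.
move=> /mx_leP H1 Ht; apply/mx_leP => x; rewrite quad_scalar mul1r quad_Omega_le //.
by rewrite -[sqnorm x]mul1r -quad_scalar H1.
Qed.

Hypothesis Omega0_ge0 : mx_le 0 Omega0.

Let quad_Omega0_ge0 x : 0 <= quad x Omega0.
Proof. by rewrite -(quad0 x); move/mx_leP: Omega0_ge0. Qed.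

Lemma Omega_ge0 t : t0 <= t -> mx_le 0 (Omega t).
Proof. by move=> Ht; apply/mx_leP => x; rewrite quad0 quad_Omega_ge0. Qed.

Lemma Omega_ge_window a b t d alpha :
  t0 <= a -> a < b -> b <= t -> (forall s, a <= s <= b -> 1 + sqnorm (phi s) <= d) ->
  ex_int_outer phi a b -> mx_le alpha%:M (int_outer phi a b) ->
  mx_le (lam * alpha / d * exp (- lam * (t - a)))%:M (Omega t).
Proof.
move=> Ha Hab Hbt Hd Hint Halpha; apply/mx_leP => x.
by rewrite quad_scalar (quad_Omega_ge_window _ Ha Hab Hbt Hd Hint Halpha).
Qed.

Variables (K rho kO : R).
Hypotheses (K_gt0 : 0 < K) (rho_gt0 : 0 < rho) (kO_ge0 : 0 <= kO).

Lemma Omega_ge_after_excitation t1 t2 alpha d t : t0 <= t1 -> t1 < t2 ->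
  (forall s, t1 <= s <= t2 -> 1 + sqnorm (phi s) <= d) ->
  ex_int_outer phi t1 t2 -> mx_le alpha%:M (int_outer phi t1 t2) ->
  kO * d / (K * rho * lam * exp (- lam * (t2 - t1))) <= alpha ->
  t2 <= t <= t2 - ln rho / lam -> mx_le (kO / K)%:M (Omega t).
Proof.
move=> t01 t12 Hd Hint Halpha Hgain /andP[t2t tt3].
have d_gt0 : 0 < d by apply: lt_le_trans (sqnorm1_gt0 _) (Hd t1 _); rewrite lexx ltW.
apply: mx_le_scalar (Omega_ge_window t01 t12 t2t Hd Hint Halpha).
apply/RleP; apply: (@OmegaFE_le_excitation_bound K rho lam kO d alpha t1 t2 t).
all: try exact/RltP; try exact/RleP.
by split; apply/RleP.
Qed.

Lemma Omega_ge_persistent_excitation t1 t2 d T alpha d' t : rho < 1 -> 0 < d ->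
  t0 <= t1 -> 0 < T -> (forall s, t1 <= s -> 1 + sqnorm (phi s) <= d') ->
  (forall s, t1 <= s -> ex_int_outer phi s (s + T)) ->
  (forall s, t1 <= s -> mx_le alpha%:M (int_outer phi s (s + T))) ->
  kO * d / (K * rho * lam * exp (- lam * (t2 - t1))) * exp (- lam * (t2 - (t1 + T))) * d' / d
    <= alpha ->
  t1 + T <= t -> mx_le (kO / K)%:M (Omega t).
Proof.
move=> rho_lt1 d_gt0 t01 T_gt0 Hd' Hint Halpha Hgain Ht.
have d'_gt0 : 0 < d' by apply: lt_le_trans (sqnorm1_gt0 _) (Hd' t1 _).
have t1_le : t1 <= t - T by rewrite lerBrDr.
have Hwin s : t - T <= s <= t -> 1 + sqnorm (phi s) <= d'.
  by case/andP=> Hs _; apply: Hd'; apply: le_trans Hs.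
(* Arguments of type [R] of [ex_int_outer] and [exp] are read in [R_scope]. *)
have := Hint _ t1_le; have := Halpha _ t1_le; rewrite RplusE subrK => Halpha2 Hint2.
have tT_lt : t - T < t by rewrite ltrBlDr ltrDl.
apply: mx_le_scalar (Omega_ge_window (le_trans t01 t1_le) tT_lt (lexx t) Hwin Hint2 Halpha2).
rewrite !RminusE subKr; apply/RleP.
apply: (@OmegaFE_le_PE_excitation_bound K rho lam kO d d' alpha t1 t2 T).
all: try exact/RltP; try exact/RleP.
by split; apply/RltP.
Qed.

End FilteredRegressor.

Lemma is_lub_sqnorm1_ge N (phi : R -> 'cV[R]_N) (P : R -> Prop) d :
  is_lub (fun y => exists tau, P tau /\ y = 1 + sqnorm (phi tau)) d ->
  forall s, P s -> 1 + sqnorm (phi s) <= d.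
Proof. by move=> [Hub _] s Ps; apply/RleP/Hub; exists s. Qed.

Theorem lemma6 (N : nat) (kappa Gmax rhoO kO lamO t0 : R)
  (phi : R -> 'cV[R]_N) (Omega : R -> 'M[R]_N) (Omega0 : 'M[R]_N) :
  0 < kappa -> 0 < Gmax -> kappa > Gmax^-1 ->
  0 < rhoO < 1 -> 1 < kO ->
  0 < lamO ->
  Omega0^T = Omega0 -> mx_le 0 Omega0 -> mx_le Omega0 1%:M ->
  solves_ode lamO t0 phi Omega Omega0 ->
  (* (1) *)
  (forall t, t0 <= t -> mx_le 0 (Omega t)) /\
  (* (2) *)
  (forall t, t0 <= t -> mx_le (Omega t) 1%:M) /\
  (* (3) *)
  (bounded_on_from t0 phi ->
   forall (t1 t2 alpha d : R),
     t0 <= t1 -> t1 < t2 ->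
     is_lub (fun y => exists tau, t1 <= tau <= t2 /\ y = 1 + sqnorm (phi tau)) d ->
     ex_int_outer phi t1 t2 ->
     mx_le (alpha%:M) (int_outer phi t1 t2) ->
     alpha >= kO * d / (kappa * Gmax * rhoO * lamO * exp (- lamO * (t2 - t1))) ->
     let OmegaFE := kO / (kappa * Gmax) in
     let t3 := t2 - ln rhoO / lamO in
     forall t, t2 <= t <= t3 ->
       mx_le (OmegaFE%:M) (Omega t) /\
       @mx_lt N ((kappa * Gmax)^-1%:M) (OmegaFE%:M)) /\
  (* (4) *)
  (bounded_on_from t0 phi ->
   forall (t1 t2 alpha d : R),
     t0 <= t1 -> t1 < t2 ->
     is_lub (fun y => exists tau, t1 <= tau <= t2 /\ y = 1 + sqnorm (phi tau)) d ->
     ex_int_outer phi t1 t2 ->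
     mx_le (alpha%:M) (int_outer phi t1 t2) ->
     alpha >= kO * d / (kappa * Gmax * rhoO * lamO * exp (- lamO * (t2 - t1))) ->
     forall (T alpha' d' : R),
       0 < T ->
       is_lub (fun y => exists tau, t1 <= tau /\ y = 1 + sqnorm (phi tau)) d' ->
       (forall t, t1 <= t -> ex_int_outer phi t (t + T)) ->
       (forall t, t1 <= t -> mx_le (alpha'%:M) (int_outer phi t (t + T))) ->
       let t2' := t1 + T in
       let alpha0 := kO * d / (kappa * Gmax * rhoO * lamO * exp (- lamO * (t2 - t1))) in
       alpha' >= alpha0 * exp (- lamO * (t2 - t2')) * d' / d ->
       let OmegaFE := kO / (kappa * Gmax) in
       forall t, t2' <= t ->
         mx_le (OmegaFE%:M) (Omega t) /\
         @mx_lt N ((kappa * Gmax)^-1%:M) (OmegaFE%:M)).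
Proof.
move=> kappa_gt0 Gmax_gt0 _ /andP[rho_gt0 rho_lt1] kO_gt1 lam_gt0 _ Omega0_ge0 Omega0_le1 sol.
have K_gt0 : 0 < kappa * Gmax by rewrite mulr_gt0.
have kO_ge0 : 0 <= kO by rewrite ltW // (lt_trans ltr01).
have FE_gt : (kappa * Gmax)^-1 < kO / (kappa * Gmax).
  by rewrite -[X in X < _]mul1r ltr_pM2r ?invr_gt0.
split; first by move=> t Ht; apply: (Omega_ge0 lam_gt0 sol Omega0_ge0 Ht).
split; first by move=> t Ht; apply: (Omega_le1 lam_gt0 sol Omega0_le1 Ht).
split=> _ t1 t2 alpha d t01 t12 Hd Hint Halpha Hgain; have Hbound := is_lub_sqnorm1_ge Hd.
  move=> OmegaFE t3 t Ht; split; last exact: mx_lt_scalar.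
  exact: (Omega_ge_after_excitation lam_gt0 sol Omega0_ge0 K_gt0 rho_gt0 kO_ge0
    t01 t12 Hbound Hint Halpha Hgain Ht).
move=> T alpha' d' T_gt0 Hd' Hint' Halpha' t2' alpha0 Hgain' OmegaFE t Ht.
split; last exact: mx_lt_scalar.
have d_gt0 : 0 < d by apply: lt_le_trans (sqnorm1_gt0 _) (Hbound t1 _); rewrite lexx ltW.
have Hbound' := is_lub_sqnorm1_ge Hd'.
exact: (Omega_ge_persistent_excitation lam_gt0 sol Omega0_ge0 K_gt0 rho_gt0 kO_ge0
  rho_lt1 d_gt0 t01 T_gt0 Hbound' Hint' Halpha' Hgain' Ht).
Qed.
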